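(* Assume $\log_2 n$ and $\log_2\log_2 n$ are integers. Consider a perfect binary tree of height $h=\log_2 n-\log_2\log_2 n$ (so it has $n/\log_2 n$ leaves) in which every node stores a randomized splitter. At most $n$ processes each start at the root and repeatedly call $\mathrm{split}()$ on the splitter of their current node: on $\mathrm{stop}$ the process leaves the tree; on $\mathrm{left}$/$\mathrm{right}$ it moves to the left/right child (a process reaching a leaf node is said to visit it). Then for any (strong adaptive) adversary, with probability at least $1-1/n$ every leaf is visited by at most $4\log_2 n$ processes.
   Context: Randomized splitter: an object with a one-time operation $\mathrm{split}()$ returning $\mathrm{stop}$, $\mathrm{left}$ or $\mathrm{right}$, such that a lone caller stops, and every caller that does not stop turns left or right with probability $1/2$ each, independently of all other processes and of the schedule. A strong adaptive adversary chooses each next step based on the entire past execution, including all coin-flip outcomes. *)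

From mathcomp Require Import all_boot all_order all_algebra.
Set Implicit Arguments. Unset Strict Implicit. Unset Printing Implicit Defensive.

(* Randomness (deferred decisions): every process i has a fresh fair coin
   for each depth d < h, namely the d-th entry of [w i]; it is used (and
   revealed) exactly when process i calls split at depth d and the splitter
   does not return stop.  A node is identified by its path from the root
   (a sequence of bools, false = left, true = right); leaves are the paths
   of length h. *)

Definition coins (k h : nat) := {ffun 'I_k -> h.-tuple bool}.

(* An event of the execution: process i called split and got
   stop (None) or left/right (Some false / Some true). *)
Definition event (k : nat) := ('I_k * option bool)%type.

(* A (strong adaptive) adversary: given the full past execution
   (including all revealed coin flips), it chooses the next process
   to take a step and whether its split() call returns stop (true) or
   turns left/right (false), or idles (None). *)
Definition adversary (k : nat) := seq (event k) -> option ('I_k * bool).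

Record state (k : nat) := State {
  pos : 'I_k -> seq bool;
  stopped : 'I_k -> bool;
  hist : seq (event k)
}.

Definition init_state (k : nat) : state k :=
  State (fun _ => [::]) (fun _ => false) [::].

Definition active (k h : nat) (s : state k) (i : 'I_k) : bool :=
  ~~ stopped s i && (size (pos s i) < h).

Definition step (k h : nat) (A : adversary k) (w : coins k h)
    (s : state k) : state k :=
  match A (hist s) with
  | Some (i, stp) =>
      if active h s i then
        if stp then
          State (pos s) (fun j => if j == i then true else stopped s j)
                (rcons (hist s) (i, None))
        else
          let c := nth false (w i) (size (pos s i)) in
          State (fun j => if j == i then rcons (pos s i) c else pos s j)
                (stopped s) (rcons (hist s) (i, Some c))
      else s
  | None => s
  end.

(* Every effective step either stops a process or moves it one level
   down, so k*h steps suffice for any execution to complete. *)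
Definition run (k h : nat) (A : adversary k) (w : coins k h) : state k :=
  iter (k * h) (step A w) (init_state k).

Definition leaf_visits (k h : nat) (s : state k) (l : h.-tuple bool) : nat :=
  #|[set i : 'I_k | pos s i == val l]|.

Definition all_leaves_light (k h : nat) (bound : nat) (s : state k) : bool :=
  [forall l : h.-tuple bool, leaf_visits s l <= bound].
Arguments all_leaves_light {k} h bound s.

Definition prob_good (k : nat) (h bound : nat) (A : adversary k) : rat :=
  (#|[set w : coins k h | all_leaves_light h bound (run A w)]|%:R
     / #|{: coins k h}|%:R)%R.
Arguments prob_good {k} h bound A.

(* Process i owns a private sequence w_i of
   h fair coins and uses its d-th coin when a splitter at depth d sends it
   left/right; whatever the adversary does, every process therefore stays on
   the root-to-leaf path spelled by w_i, and a leaf l is visited by at most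
   #{i | w_i = l} processes.  The event "some leaf gets more than 4a visits"
   is thus contained in the adversary-independent event "some bin l of the
   uniform map i |-> w_i receives at least t = 4a+1 balls", whose count is
   bounded by a union bound over the bin and the t-set of balls.  Finally an
   elementary estimate on factorials ((4a)! >= 4^a a^(4a) for a a power of
   two) shows that this count is at most a 1/n fraction of all coin choices. *)

From mathcomp Require Import all_boot all_order all_algebra zify ring lra.
Set Implicit Arguments. Unset Strict Implicit. Unset Printing Implicit Defensive.

Section Trajectories.
Variables (k h : nat) (A : adversary k) (w : coins k h).

(* Deferred decisions: every process's current node is the prefix of its
   private coin sequence of the same length; this holds initially and is
   preserved by each step, since a moving process at depth d uses coin d. *)
Definition follows_coins (s : state k) : Prop :=
  forall i, pos s i = take (size (pos s i)) (w i).

Lemma step_follows_coins s : follows_coins s -> follows_coins (step A w s).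
Proof.
rewrite /step => fs; case: (A (hist s)) => [[i stp]|] //.
case: ifP => // /andP[_ below_leaf]; case: stp => // j /=.
case: eqP => [->|_]; last exact: fs.
by rewrite size_rcons (take_nth false) ?size_tuple // -fs.
Qed.

Lemma run_follows_coins : follows_coins (run A w).
Proof.
rewrite /run; elim: (k * h) => [|r IH] /=; first by move=> i; rewrite take0.
exact: step_follows_coins.
Qed.

(* Hence a process can only end at leaf l if its whole coin sequence is l. *)
Lemma leaf_visits_le_coin_matches (l : h.-tuple bool) :
  leaf_visits (run A w) l <= #|[set i | w i == l]|.
Proof.
apply: subset_leq_card; apply/subsetP => i; rewrite !inE => /eqP at_l.
have := run_follows_coins i; rewrite at_l size_tuple take_oversize ?size_tuple //.
by move=> coins_l; apply/eqP/val_inj.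
Qed.

End Trajectories.

Lemma card_bigcup_le (I T : finType) (P : pred I) (F : I -> {set T}) :
  #|\bigcup_(i | P i) F i| <= \sum_(i | P i) #|F i|.
Proof.
apply: (big_ind2 (fun (U : {set T}) n => #|U| <= n)); first by rewrite cards0.
  move=> U1 n1 U2 n2 le1 le2.
  exact: leq_trans (leq_card_setU _ _) (leq_add le1 le2).
by [].
Qed.

Lemma exists_subset_of_card (T : finType) (X : {set T}) t :
  t <= #|X| -> exists2 S : {set T}, S \subset X & #|S| = t.
Proof.
elim: t => [|t IH] t_le; first by exists set0; rewrite ?sub0set ?cards0.
have [S sub_SX card_S] := IH (ltnW t_le).
have : 0 < #|X :\: S| by rewrite cardsD (setIidPr sub_SX) card_S subn_gt0.
case/card_gt0P => x; rewrite inE => /andP[x_notin_S x_in_X].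
exists (x |: S); first by rewrite subUset sub1set x_in_X.
by rewrite cardsU1 x_notin_S card_S.
Qed.

Section Occupancy.
Variables (I D : finType).

Definition constant_on (S : {set I}) (d : D) : {set {ffun I -> D}} :=
  [set f : {ffun I -> D} | [forall i in S, f i == d]].

Lemma card_constant_on S d : #|constant_on S d| = #|D| ^ (#|I| - #|S|).
Proof.
pose F i : pred D := if i \in S then pred1 d else predT.
rewrite -(@eq_card _ (family F)); last first.
  move=> f; rewrite [f \in constant_on _ _]inE.
  apply/familyP/forall_inP => [fF i i_in_S | fS i].
    by have := fF i; rewrite /F i_in_S.
  by rewrite /F; case: ifP => //= /fS.
rewrite card_family foldrE big_map big_enum /=.
rewrite (eq_bigr (fun i => if i \in ~: S then #|D| else 1)); last first.
  by move=> i _; rewrite /F inE; case: (i \in S); rewrite ?card1 ?cardT.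
by rewrite -big_mkcond prod_nat_const -(cardsC S) addKn.
Qed.

Definition overloaded (t : nat) : {set {ffun I -> D}} :=
  [set f : {ffun I -> D} | [exists d, t <= #|[set i | f i == d]|]].

(* Union bound over the bin d and the t-set S of balls landing in it. *)
Lemma card_overloaded t :
  #|overloaded t| <= #|D| * ('C(#|I|, t) * #|D| ^ (#|I| - t)).
Proof.
set tsets := [set S : {set I} | #|S| == t].
apply: (@leq_trans #|\bigcup_d \bigcup_(S in tsets) constant_on S d|).
  apply: subset_leq_card; apply/subsetP => f; rewrite inE => /existsP[d fibre_big].
  have [S sub_S card_S] := exists_subset_of_card fibre_big.
  apply/bigcupP; exists d => //; apply/bigcupP; exists S; first by rewrite inE card_S.
  by rewrite inE; apply/forall_inP => i /(subsetP sub_S); rewrite inE.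
apply: leq_trans (card_bigcup_le _ _) _.
apply: (@leq_trans (\sum_(d : D) 'C(#|I|, t) * #|D| ^ (#|I| - t))); last first.
  by rewrite sum_nat_const.
apply: leq_sum => d _; apply: leq_trans (card_bigcup_le _ _) _.
rewrite -card_draws -sum_nat_const; apply: leq_sum => S; rewrite inE => /eqP <-.
by rewrite card_constant_on.
Qed.
End Occupancy.

(* The upper half of (2x)!: pairing i with 3x+1-i shows each pair has product
   at least 2x^2. *)
Lemma upper_half_prod_sq x :
  2 ^ x * x ^ (2 * x) <= (\prod_(x.+1 <= i < (2 * x).+1) i) ^ 2.
Proof.
rewrite expnS expn1 {1}big_nat_rev -big_split /= big_nat_cond.
apply: (@leq_trans (\prod_(x.+1 <= i < (2 * x).+1 | (x.+1 <= i < (2 * x).+1) && true)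
                      (2 * x ^ 2))).
  rewrite -big_nat_cond prod_nat_const_nat (_ : (2 * x).+1 - x.+1 = x); last lia.
  by rewrite expnMn -expnM mulnC.
apply: leq_prod => i /andP[/andP[lo hi] _].
rewrite (_ : x.+1 + (2 * x).+1 - i.+1 = 3 * x + 1 - i); nia.
Qed.

Lemma fact_double x : (2 * x)`! = x`! * \prod_(x.+1 <= i < (2 * x).+1) i.
Proof. by rewrite !fact_prod (big_cat_nat (n := x.+1)) //=; lia. Qed.

Lemma fact_pow2_lower x c : x = 2 ^ c -> 8 * x ^ (2 * x) <= 8 ^ x * x`! ^ 2.
Proof.
elim: c x => [|c IH] _ -> //; rewrite expnS.
move: {IH}(IH _ erefl); set x := 2 ^ c => IH.
have halves : 8 * 2 ^ x * (x ^ (2 * x)) ^ 2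
              <= 8 ^ x * x`! ^ 2 * (\prod_(x.+1 <= i < (2 * x).+1) i) ^ 2.
  by rewrite [_ ^ 2]expnS expn1 mulnACA; exact: leq_mul IH (upper_half_prod_sq x).
have pow_double : (2 * x) ^ (2 * (2 * x)) = 8 ^ x * (2 ^ x * (x ^ (2 * x)) ^ 2).
  have pow2 : 2 ^ (2 * (2 * x)) = 8 ^ x * 2 ^ x.
    by rewrite -expnMn (_ : 2 * (2 * x) = 4 * x) ?expnM //; lia.
  by rewrite expnMn pow2 -mulnA -expnM (mulnC _ 2).
have -> : 8 ^ (2 * x) = 8 ^ x * 8 ^ x by rewrite mul2n -addnn expnD.
rewrite pow_double fact_double expnMn mulnCA -[8 ^ x * 8 ^ x * _]mulnA.
rewrite leq_pmul2l ?expn_gt0 //.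
by rewrite (mulnA 8) (mulnA (8 ^ x)).
Qed.

Lemma fact_lower_bound a b : a = 2 ^ b -> 4 ^ a * a ^ (4 * a) <= (4 * a)`!.
Proof.
move=> a_pow2; have /fact_pow2_lower doubled : 4 * a = 2 ^ b.+2.
  by rewrite a_pow2 !expnS mulnA.
have pow_split y : (4 * y) ^ (2 * (4 * y)) = 8 ^ (4 * y) * (4 ^ y * y ^ (4 * y)) ^ 2.
  have base2 e m : (2 ^ e) ^ m = 2 ^ (e * m) by rewrite expnM.
  rewrite expnMn [in RHS]expnMn -!expnM [RHS]mulnA -[4]/(2 ^ 2) -[8]/(2 ^ 3) !base2 -expnD.
  by congr (2 ^ _ * y ^ _); lia.
rewrite pow_split mulnCA leq_pmul2l ?expn_gt0 // in doubled.
by rewrite -leq_sqr; apply: leq_trans doubled; apply: leq_pmull.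
Qed.

Lemma ffact_le_expn n t : n ^_ t <= n ^ t.
Proof.
elim: t => [|t IH] //; rewrite ffactnSr expnS mulnC.
by apply: leq_mul => //; exact: leq_subr.
Qed.

(* The numerical heart of the union bound: with m = 2^(a-b) = 2^a / a leaves
   and t = 4a+1, the expected number of pairs (leaf, t-set of processes all
   directed to that leaf), times n = 2^a, is at most 1; in counting form,
   n * m * C(k, t) * m^(k-t) <= m^k. *)
Lemma tail_estimate a b k : a = 2 ^ b -> k <= 2 ^ a ->
  2 ^ a * (2 ^ (a - b) * ('C(k, (4 * a).+1) * (2 ^ (a - b)) ^ (k - (4 * a).+1)))
  <= (2 ^ (a - b)) ^ k.
Proof.
move=> a_pow2 k_le; set m := 2 ^ (a - b); set t := (4 * a).+1.
have ma : m * a = 2 ^ a.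
  have b_le_a : b <= a by rewrite a_pow2 ltnW // ltn_expl.
  by rewrite /m {2}a_pow2 -expnD subnK.
have [k_small | t_le_k] := ltnP k t; first by rewrite bin_small // !(mul0n, muln0).
have -> : m ^ k = m ^ t * m ^ (k - t) by rewrite -expnD subnKC.
rewrite !mulnA leq_pmul2r ?expn_gt0 // -(leq_pmul2r (fact_gt0 t)) -mulnA bin_ffact.
have falling : k ^_ t <= (m * a) ^ t.
  by apply: leq_trans (ffact_le_expn k t) _; rewrite leq_exp2r // ma.
have fact_big : (m * a) ^ 2 * a ^ (4 * a) <= t`!.
  rewrite ma -expnM (mulnC a 2) expnM; apply: leq_trans (fact_lower_bound a_pow2) _.
  exact: leq_fact.
rewrite -ma; apply: leq_trans (_ : m * a * m * (m * a) ^ t <= _).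
  by rewrite leq_mul2l falling orbT.
rewrite (_ : m * a * m * (m * a) ^ t = m ^ t * ((m * a) ^ 2 * a ^ (4 * a))).
  by rewrite leq_mul2l fact_big orbT.
by rewrite /t !expnMn !expnS; set M := m ^ (4 * a); set A := a ^ (4 * a); ring.
Qed.

Import GRing.Theory Num.Theory.
Local Open Scope ring_scope.

Lemma ratio_ge_one_minus_inv (R : realFieldType) (T : finType) (G : {set T}) n :
  (0 < n)%N -> (0 < #|T|)%N -> (n * #|~: G| <= #|T|)%N ->
  1 - 1 / n%:R <= #|G|%:R / #|T|%:R :> R.
Proof.
move=> n_gt0 T_gt0 few_bad.
have n_pos : 0 < n%:R :> R by rewrite ltr0n.
have T_pos : 0 < #|T|%:R :> R by rewrite ltr0n.
have bad_le : #|~: G|%:R <= #|T|%:R / n%:R :> R.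
  by rewrite ler_pdivlMr // -natrM ler_nat mulnC.
have split_T : #|T|%:R = #|G|%:R + #|~: G|%:R :> R by rewrite -natrD cardsC.
rewrite ler_pdivlMr // mulrBl mul1r mul1r [_^-1 * _]mulrC.
lra.
Qed.

Theorem lemma8 (n a b : nat) (Hn : n = (2 ^ a)%N) (Ha : a = (2 ^ b)%N)
  (k : nat) (Hk : (k <= n)%N) (A : adversary k) :
  1 - 1 / n%:R <= prob_good (a - b) (4 * a) A.
Proof.
set h := (a - b)%N; set t := (4 * a).+1.
have card_coins : #|{: coins k h}| = ((2 ^ h) ^ k)%N.
  by rewrite card_ffun card_tuple card_bool card_ord.
have bad_overloaded :
    ~: [set w : coins k h | all_leaves_light h (4 * a) (run A w)] \subset overloaded _ _ t.
  apply/subsetP => w; rewrite !inE negb_forall => /existsP[l heavy].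
  apply/existsP; exists l; rewrite -ltnNge in heavy.
  exact: leq_trans heavy (leaf_visits_le_coin_matches A w l).
have few_bad : (n * #|overloaded 'I_k (h.-tuple bool) t| <= #|{: coins k h}|)%N.
  have := card_overloaded 'I_k (h.-tuple bool) t; rewrite card_tuple card_bool card_ord.
  move=> /(leq_mul (leqnn n)) /leq_trans; apply; rewrite card_coins Hn.
  by apply: tail_estimate; rewrite -?Hn.
apply: ratio_ge_one_minus_inv; first by rewrite Hn expn_gt0.
  by rewrite card_coins !expn_gt0.
by apply: leq_trans few_bad; rewrite leq_mul2l subset_leq_card ?orbT.
Qed.
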